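(* Let $X$ be a compact metric space and $(x_n)_{n\in\mathbb{N}}$ a dense sequence in $X$. Then there is a coloring $c:[\mathbb{N}]^2\to2$ such that for every infinite $c$-homogeneous set $h\subseteq\mathbb{N}$ the subsequence $(x_n)_{n\in h}$ converges. Consequently the family $\mathcal{C}(x_n)_n=\{y\subseteq\mathbb{N}:(x_n)_{n\in y}\text{ is convergent}\}$ has a Borel selector.
   Context: A set $h$ is $c$-homogeneous if $c$ is constant on $[h]^2$. A Borel selector for a tall family $\mathcal{C}\subseteq2^{\mathbb{N}}$ is a Borel $S:2^{\mathbb{N}}\to2^{\mathbb{N}}$ with $S(x)\subseteq x$, $S(x)\in\mathcal{C}$, and $S(x)$ infinite whenever $x$ is infinite (subsets of $\mathbb{N}$ identified with elements of $2^{\mathbb{N}}$). *)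

From Stdlib Require Import Reals.
Open Scope R_scope.

Definition is_metric {X : Type} (d : X -> X -> R) : Prop :=
  (forall x y, 0 <= d x y) /\
  (forall x y, d x y = 0 <-> x = y) /\
  (forall x y, d x y = d y x) /\
  (forall x y z, d x z <= d x y + d y z).

Definition ball {X : Type} (d : X -> X -> R) (x : X) (r : R) : X -> Prop :=
  fun y => d x y < r.

Definition metric_open {X : Type} (d : X -> X -> R) (U : X -> Prop) : Prop :=
  forall x, U x -> exists r, 0 < r /\ forall y, ball d x r y -> U y.

Definition metric_compact {X : Type} (d : X -> X -> R) : Prop :=
  forall (I : Type) (U : I -> X -> Prop),
    (forall i, metric_open d (U i)) ->
    (forall x, exists i, U i x) ->
    exists l : list I, forall x, exists i, List.In i l /\ U i x.

Definition dense_seq {X : Type} (d : X -> X -> R) (x : nat -> X) : Prop :=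
  forall (z : X) (eps : R), 0 < eps -> exists n, d (x n) z < eps.

(** Subsets of nat are identified with elements of 2^N = nat -> bool. *)
Definition infinite_set (y : nat -> bool) : Prop :=
  forall N : nat, exists n, (N <= n)%nat /\ y n = true.

Definition subset_of (y z : nat -> bool) : Prop :=
  forall n, y n = true -> z n = true.

(** A coloring c : [N]^2 -> 2, where the pair {m,n} with m < n gets colour c m n. *)
Definition homogeneous (c : nat -> nat -> bool) (h : nat -> bool) : Prop :=
  exists b : bool, forall m n, h m = true -> h n = true -> (m < n)%nat -> c m n = b.

(** (x_n)_{n in y} converges (along the increasing enumeration of y). *)
Definition converges_along {X : Type} (d : X -> X -> R) (x : nat -> X)
    (y : nat -> bool) : Prop :=
  exists L : X, forall eps, 0 < eps ->
    exists N : nat, forall n, (N <= n)%nat -> y n = true -> d (x n) L < eps.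

Definition conv_family {X : Type} (d : X -> X -> R) (x : nat -> X) :
    (nat -> bool) -> Prop :=
  fun y => converges_along d x y.

Inductive borel : ((nat -> bool) -> Prop) -> Prop :=
  | borel_cyl : forall (n : nat) (b : bool), borel (fun f => f n = b)
  | borel_compl : forall A, borel A -> borel (fun f => ~ A f)
  | borel_union : forall A : nat -> (nat -> bool) -> Prop,
      (forall k, borel (A k)) -> borel (fun f => exists k, A k f)
  | borel_ext : forall A B, borel A -> (forall f, A f <-> B f) -> borel B.

Definition borel_map (S : (nat -> bool) -> (nat -> bool)) : Prop :=
  forall B, borel B -> borel (fun f => B (S f)).

Definition borel_selector (C : (nat -> bool) -> Prop)
    (S : (nat -> bool) -> (nat -> bool)) : Prop :=
  borel_map S /\
  (forall x, subset_of (S x) x) /\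
  (forall x, C (S x)) /\
  (forall x, infinite_set x -> infinite_set (S x)).

From Stdlib Require Import Reals Lra Lia Classical ClassicalEpsilon List Arith Wf_nat.
Open Scope R_scope.

(* Cover [X], for each [k], by finitely many balls of radius [1/(k+1)] and give
   [x n] an address: the sequence of indices of balls containing it.  Colour a
   pair by whether the addresses increase lexicographically.  Along a
   homogeneous set, once the first [K] coordinates have settled, the [K]-th one
   moves monotonically in a bounded range and so settles too; the subsequence is
   then Cauchy, hence convergent by compactness.
   The selector follows the leftmost branch of the finitely branching tree of
   address prefixes shared by infinitely many elements of [y], keeping elements
   of [y] whose addresses agree with ever longer prefixes of that branch.  Each membership decision is a countable Boolean
   combination of cylinder conditions on [y], so the selector is Borel. *)

Section CompactMetric.

Variables (X : Type) (d : X -> X -> R).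
Hypothesis Hmet : is_metric d.
Hypothesis Hcpt : metric_compact d.

Lemma metric_open_ball (c : X) (r : R) : metric_open d (ball d c r).
Proof.
  destruct Hmet as [_ [_ [_ Htri]]].
  intros z Hz. exists (r - d c z). split; [unfold ball in Hz; lra|].
  intros w Hw. unfold ball in *. pose proof (Htri c z w). lra.
Qed.

Lemma ball_center (c : X) (r : R) : 0 < r -> ball d c r c.
Proof.
  destruct Hmet as [_ [Hzero _]]. intro Hr. unfold ball.
  rewrite (proj2 (Hzero c c) eq_refl). exact Hr.
Qed.

Lemma compact_finite_net (r : R) :
  0 < r -> exists l : list X, forall z, exists c, In c l /\ d c z < r.
Proof.
  intro Hr.
  destruct (Hcpt X (fun c => ball d c r)) as [l Hl].
  - intro c. apply metric_open_ball.
  - intro z. exists z. apply ball_center, Hr.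
  - exists l. exact Hl.
Qed.

Lemma cauchy_along_converges (x : nat -> X) (h : nat -> bool) :
  (forall eps, 0 < eps -> exists N, forall n m, (N <= n)%nat -> (N <= m)%nat ->
     h n = true -> h m = true -> d (x n) (x m) < eps) ->
  converges_along d x h.
Proof.
  intro Hcau. destruct Hmet as [_ [_ [Hsym Htri]]].
  apply NNPP; intro Hdiv.
  (* every point [y] stays [e]-far from infinitely many terms, for some [e] *)
  set (far := fun (p : X * R) => 0 < snd p /\
         forall N, exists n, (N <= n)%nat /\ h n = true /\ snd p <= d (x n) (fst p)).
  assert (Hfar : forall y, exists e, far (y, e)).
  { intro y. apply NNPP; intro Hnear. apply Hdiv. exists y. intros eps Heps.
    apply NNPP; intro HN. apply Hnear. exists eps. split; [exact Heps|].
    intro N. apply NNPP; intro Hn. apply HN. exists N. intros n HNn Hhn.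
    apply Rnot_le_lt. intro Hle. apply Hn. now exists n. }
  destruct (Hcpt {p | far p} (fun p => ball d (fst (proj1_sig p)) (snd (proj1_sig p) / 2)))
    as [l Hl].
  - intro p. apply metric_open_ball.
  - intro y. destruct (Hfar y) as [e He]. exists (exist _ (y, e) He).
    apply ball_center. simpl. pose proof (proj1 He) as He0. simpl in He0. lra.
  - assert (HN : exists N, forall p, In p l -> forall n m, (N <= n)%nat -> (N <= m)%nat ->
        h n = true -> h m = true -> d (x n) (x m) < snd (proj1_sig p) / 2).
    { clear Hl. induction l as [|[p Hp] l [N1 HN1]].
      - exists 0%nat. intros p [].
      - destruct (Hcau (snd p / 2)) as [N2 HN2]; [destruct Hp; lra|].
        exists (max N1 N2). intros q [<-|Hq] n m Hn Hm Hhn Hhm.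
        + apply HN2; auto; lia.
        + apply (HN1 q Hq); auto; lia. }
    destruct HN as [N HN].
    destruct (Hfar (x 0%nat)) as [e0 [_ He0]].
    destruct (He0 N) as [n [Hn [Hhn _]]].
    destruct (Hl (x n)) as [q [Hin Hball]]. unfold ball in Hball.
    destruct (proj2 (proj2_sig q) N) as [m [Hm [Hhm Hle]]].
    pose proof (HN q Hin n m Hn Hm Hhn Hhm) as Hnm.
    pose proof (Htri (x m) (x n) (fst (proj1_sig q))) as Htr.
    rewrite (Hsym (x m) (x n)), (Hsym (x n) (fst (proj1_sig q))) in Htr. lra.
Qed.

Lemma addresses_exist (x : nat -> X) :
  exists (a : nat -> nat -> nat) (B : nat -> nat) (cen : nat -> nat -> X),
    (forall k n, (a k n < B k)%nat) /\
    (forall k n, d (cen k (a k n)) (x n) < / INR (S k)).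
Proof.
  assert (Hnet : forall k, exists l : list X,
             forall z, exists c, In c l /\ d c z < / INR (S k)).
  { intro k. apply compact_finite_net, Rinv_0_lt_compat, lt_0_INR. lia. }
  destruct (choice _ Hnet) as [net Hnetk].
  assert (Hidx : forall kn : nat * nat, exists i, (i < length (net (fst kn)))%nat /\
             d (nth i (net (fst kn)) (x 0%nat)) (x (snd kn)) < / INR (S (fst kn))).
  { intros [k n]. destruct (Hnetk k (x n)) as [c [Hc Hd]].
    destruct (In_nth _ _ (x 0%nat) Hc) as [i [Hi <-]]. now exists i. }
  destruct (choice _ Hidx) as [idx Hidxk].
  exists (fun k n => idx (k, n)), (fun k => length (net k)), (fun k i => nth i (net k) (x 0%nat)).
  split; intros k n; apply (Hidxk (k, n)).
Qed.

Lemma converges_of_stable_addresses (x : nat -> X) (a : nat -> nat -> nat)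
    (cen : nat -> nat -> X) (h : nat -> bool) :
  (forall k n, d (cen k (a k n)) (x n) < / INR (S k)) ->
  (forall k, exists N, forall n m, (N <= n)%nat -> (N <= m)%nat ->
     h n = true -> h m = true -> a k n = a k m) ->
  converges_along d x h.
Proof.
  intros Hcen Hstab. apply cauchy_along_converges. intros eps Heps.
  destruct (archimed_cor1 (eps / 2)) as [M [HM HM0]]; [lra|].
  destruct (Hstab (M - 1)%nat) as [N HN]. exists N. intros n m Hn Hm Hhn Hhm.
  set (c := cen (M - 1)%nat (a (M - 1)%nat m)).
  pose proof (Hcen (M - 1)%nat n) as Hnc. pose proof (Hcen (M - 1)%nat m) as Hmc.
  rewrite (HN n m Hn Hm Hhn Hhm) in Hnc. fold c in Hnc, Hmc.
  replace (S (M - 1)) with M in Hnc, Hmc by lia.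
  destruct Hmet as [_ [_ [Hsym Htri]]].
  pose proof (Htri (x n) c (x m)) as Htr. rewrite (Hsym (x n) c) in Htr. lra.
Qed.

End CompactMetric.
Open Scope nat_scope.

Definition asbool (P : Prop) : bool := if excluded_middle_informative P then true else false.

Lemma asbool_true (P : Prop) : asbool P = true <-> P.
Proof.
  unfold asbool. destruct (excluded_middle_informative P); split; intro H;
    solve [auto | discriminate | contradiction].
Qed.

Lemma eventually_constant_of_descent (h : nat -> bool) (g mu : nat -> nat) (N : nat) :
  infinite_set h ->
  (forall m n, N <= m -> m < n -> h m = true -> h n = true -> g m <> g n -> mu n < mu m) ->
  exists N' v, forall n, N' <= n -> h n = true -> g n = v.
Proof.
  intros Hinf Hdesc.
  destruct (Hinf N) as [n0 [Hn0 Hh0]]. revert Hn0 Hh0.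
  induction n0 as [n1 IH] using (induction_ltof1 _ mu). intros Hn1 Hh1.
  destruct (classic (exists n, n1 < n /\ h n = true /\ g n <> g n1))
    as [[n [Hlt [Hhn Hg]]] | Hconst].
  - apply (IH n); [apply (Hdesc n1 n); auto | lia | exact Hhn].
  - exists n1, (g n1). intros n Hn Hhn.
    destruct (Nat.eq_dec n n1) as [-> | Hne]; [reflexivity|].
    apply NNPP; intro Hg. apply Hconst. exists n. repeat split; auto; lia.
Qed.

Definition lex_lt (u v : nat -> nat) : Prop :=
  exists k, (forall j, j < k -> u j = v j) /\ u k < v k.

Definition lex_coloring (a : nat -> nat -> nat) (m n : nat) : bool :=
  asbool (lex_lt (fun k => a k m) (fun k => a k n)).

Lemma lex_coloring_descent (a : nat -> nat -> nat) (B : nat -> nat) (K m n : nat) (b : bool) :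
  (forall k n, a k n < B k) ->
  (forall j, j < K -> a j m = a j n) -> lex_coloring a m n = b -> a K m <> a K n ->
  (if b then B K - a K n else a K n) < (if b then B K - a K m else a K m).
Proof.
  intros Ha Hagree Hcol Hne. unfold lex_coloring in Hcol. destruct b.
  - rewrite asbool_true in Hcol. destruct Hcol as [k [Hbelow Hk]].
    pose proof (Ha K n).
    destruct (lt_eq_lt_dec k K) as [[Hlt | ->] | Hgt]; [| lia |].
    + rewrite (Hagree k Hlt) in Hk. lia.
    + exfalso. apply Hne, Hbelow, Hgt.
  - destruct (Nat.lt_total (a K m) (a K n)) as [Hlt | [Heq | Hgt]]; [| contradiction | exact Hgt].
    enough (asbool (lex_lt (fun k => a k m) (fun k => a k n)) = true) by congruence.
    apply asbool_true. now exists K.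
Qed.

Lemma lex_homogeneous_prefix_stabilizes (a : nat -> nat -> nat) (B : nat -> nat)
    (h : nat -> bool) :
  (forall k n, a k n < B k) -> infinite_set h -> homogeneous (lex_coloring a) h ->
  forall K, exists N (tau : nat -> nat),
    forall n, N <= n -> h n = true -> forall j, j < K -> a j n = tau j.
Proof.
  intros Ha Hinf [b Hb] K. induction K as [|K [N [tau Htau]]].
  - exists 0, (fun _ => 0). intros. lia.
  - destruct (eventually_constant_of_descent h (a K)
                (fun n => if b then B K - a K n else a K n) N Hinf) as [N' [v Hv]].
    { intros m n Hm Hmn Hhm Hhn. apply (lex_coloring_descent a B); auto.
      intros j Hj. rewrite (Htau m Hm Hhm j Hj), (Htau n ltac:(lia) Hhn j Hj).
      reflexivity. }
    exists (max N N'), (fun j => if Nat.eq_dec j K then v else tau j).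
    intros n Hn Hhn j Hj. destruct (Nat.eq_dec j K) as [-> | Hne].
    + apply Hv; [lia | exact Hhn].
    + apply Htau; [lia | exact Hhn | lia].
Qed.

Lemma lex_homogeneous_addresses_stabilize (a : nat -> nat -> nat) (B : nat -> nat)
    (h : nat -> bool) :
  (forall k n, a k n < B k) -> infinite_set h -> homogeneous (lex_coloring a) h ->
  forall k, exists N, forall n m, N <= n -> N <= m -> h n = true -> h m = true ->
    a k n = a k m.
Proof.
  intros Ha Hinf Hhom k.
  destruct (lex_homogeneous_prefix_stabilizes a B h Ha Hinf Hhom (S k)) as [N [tau Htau]].
  exists N. intros n m Hn Hm Hhn Hhm.
  rewrite (Htau n Hn Hhn k), (Htau m Hm Hhm k) by lia. reflexivity.
Qed.

Lemma borel_or (A C : (nat -> bool) -> Prop) :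
  borel A -> borel C -> borel (fun f => A f \/ C f).
Proof.
  intros HA HC.
  apply borel_ext with (fun f => exists k, (if k =? 0 then A else C) f).
  - apply borel_union. intro k. destruct (k =? 0); assumption.
  - intro f. split.
    + intros [k Hk]. destruct (k =? 0); [left | right]; exact Hk.
    + intros [H | H]; [exists 0 | exists 1]; exact H.
Qed.

Lemma borel_and (A C : (nat -> bool) -> Prop) :
  borel A -> borel C -> borel (fun f => A f /\ C f).
Proof.
  intros HA HC. apply borel_ext with (fun f => ~ (~ A f \/ ~ C f)).
  - apply borel_compl, borel_or; apply borel_compl; assumption.
  - intro f. destruct (classic (A f)), (classic (C f)); tauto.
Qed.

Lemma borel_forall (A : nat -> (nat -> bool) -> Prop) :
  (forall k, borel (A k)) -> borel (fun f => forall k, A k f).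
Proof.
  intro HA. apply borel_ext with (fun f => ~ exists k, ~ A k f).
  - apply borel_compl, borel_union. intro k. apply borel_compl, HA.
  - intro f. split.
    + intros Hnone k. apply NNPP. intro Hk. apply Hnone. now exists k.
    + intros Hall [k Hk]. apply Hk, Hall.
Qed.

Lemma borel_const (Q : Prop) : borel (fun _ => Q).
Proof.
  assert (Htrue : borel (fun f => f 0 = true \/ ~ f 0 = true)).
  { apply borel_or; [apply borel_cyl | apply borel_compl, borel_cyl]. }
  destruct (classic Q) as [HQ | HQ].
  - apply (borel_ext _ _ Htrue). intro f. split; [auto | intros _; apply classic].
  - apply (borel_ext _ _ (borel_compl _ Htrue)). intro f. split; [|contradiction].
    intro Hnot. exfalso. apply Hnot, classic.
Qed.

Section AddressTree.

Variable a : nat -> nat -> nat.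

Definition inf_many (f : nat -> bool) (P : nat -> Prop) : Prop :=
  forall N, exists m, N <= m /\ f m = true /\ P m.

Definition prefix_agrees (tau : nat -> nat) (k m : nat) : Prop :=
  forall j, j < k -> a j m = tau j.

Definition set_at (tau : nat -> nat) (k i : nat) : nat -> nat :=
  fun j => if j =? k then i else tau j.

(* The first [k] values of [tau] form the leftmost path of length [k] in the
   finitely branching tree of address prefixes shared by infinitely many
   elements of [f]. *)
Fixpoint leftmost_branch (f : nat -> bool) (k : nat) (tau : nat -> nat) : Prop :=
  match k with
  | 0 => True
  | S k' => leftmost_branch f k' tau /\ inf_many f (prefix_agrees tau k) /\
            forall i, i < tau k' -> ~ inf_many f (prefix_agrees (set_at tau k' i) k)
  end.

Lemma inf_many_mono (f : nat -> bool) (P Q : nat -> Prop) :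
  (forall m, P m -> Q m) -> inf_many f P -> inf_many f Q.
Proof.
  intros HPQ HP N. destruct (HP N) as [m [HNm [Hfm HPm]]]. exists m. auto.
Qed.

Lemma prefix_agrees_ext (tau tau' : nat -> nat) (k m : nat) :
  (forall j, j < k -> tau j = tau' j) -> prefix_agrees tau k m -> prefix_agrees tau' k m.
Proof. intros Heq Hm j Hj. rewrite <- Heq by exact Hj. apply Hm, Hj. Qed.

Lemma set_at_agree (tau tau' : nat -> nat) (k i : nat) :
  (forall j, j < k -> tau j = tau' j) ->
  forall j, j < S k -> set_at tau k i j = set_at tau' k i j.
Proof.
  intros Heq j Hj. unfold set_at. destruct (Nat.eqb_spec j k); [reflexivity|].
  apply Heq. lia.
Qed.

Lemma prefix_agrees_set_at (tau : nat -> nat) (k i m : nat) :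
  prefix_agrees (set_at tau k i) (S k) m <-> prefix_agrees tau k m /\ a k m = i.
Proof.
  unfold prefix_agrees, set_at. split.
  - intro Hm. split.
    + intros j Hj. rewrite Hm by lia. destruct (Nat.eqb_spec j k); [lia | reflexivity].
    + rewrite Hm by lia. now rewrite Nat.eqb_refl.
  - intros [Hm Hk] j Hj. destruct (Nat.eqb_spec j k) as [-> | Hne]; [exact Hk|].
    apply Hm. lia.
Qed.

Lemma leftmost_branch_ext (f : nat -> bool) (k : nat) :
  forall tau tau', (forall j, j < k -> tau j = tau' j) ->
  leftmost_branch f k tau -> leftmost_branch f k tau'.
Proof.
  induction k as [|k IH]; intros tau tau' Heq HB; [exact I|].
  destruct HB as [HBk [Hinf Hleft]]. split; [|split].
  - apply (IH tau); auto.
  - revert Hinf. apply inf_many_mono. intro m. apply prefix_agrees_ext, Heq.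
  - intros i Hi Hinf'. apply (Hleft i); [rewrite Heq; lia|].
    revert Hinf'. apply inf_many_mono. intro m. apply prefix_agrees_ext.
    intros j Hj. symmetry. apply set_at_agree; [intros j' Hj'; apply Heq; lia | exact Hj].
Qed.

Lemma leftmost_branch_le (f : nat -> bool) (k k' : nat) (tau : nat -> nat) :
  k' <= k -> leftmost_branch f k tau -> leftmost_branch f k' tau.
Proof.
  induction 1 as [|k Hk IH]; intro HB; [exact HB|]. exact (IH (proj1 HB)).
Qed.

Lemma leftmost_branch_not_left (f : nat -> bool) (k : nat) (tau tau' : nat -> nat) :
  (forall j, j < k -> tau j = tau' j) ->
  leftmost_branch f (S k) tau -> leftmost_branch f (S k) tau' -> tau' k <= tau k.
Proof.
  intros Heq [_ [Hinf _]] [_ [_ Hleft']]. apply Nat.nlt_ge. intro Hlt.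
  apply (Hleft' (tau k) Hlt). revert Hinf. apply inf_many_mono. intro m.
  apply prefix_agrees_ext. intros j Hj. unfold set_at.
  destruct (Nat.eqb_spec j k) as [-> | Hne]; [reflexivity|]. apply Heq. lia.
Qed.

Lemma leftmost_branch_unique (f : nat -> bool) (k : nat) :
  forall tau tau', leftmost_branch f k tau -> leftmost_branch f k tau' ->
  forall j, j < k -> tau j = tau' j.
Proof.
  induction k as [|k IH]; intros tau tau' HB HB' j Hj; [lia|].
  assert (Hbelow : forall j, j < k -> tau j = tau' j) by exact (IH _ _ (proj1 HB) (proj1 HB')).
  destruct (Nat.lt_ge_cases j k) as [Hjk | Hjk]; [auto|]. replace j with k by lia.
  pose proof (leftmost_branch_not_left f k tau tau' Hbelow HB HB').
  pose proof (leftmost_branch_not_left f k tau' tau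
                (fun j Hj => eq_sym (Hbelow j Hj)) HB' HB).
  lia.
Qed.

Lemma inf_many_pigeonhole (f : nat -> bool) (g : nat -> nat) (n : nat) :
  forall P : nat -> Prop, inf_many f P -> (forall m, P m -> g m < n) ->
  exists i, i < n /\ inf_many f (fun m => P m /\ g m = i).
Proof.
  induction n as [|n IH]; intros P HP Hbound.
  - destruct (HP 0) as [m [_ [_ Hm]]]. specialize (Hbound m Hm). lia.
  - destruct (classic (inf_many f (fun m => P m /\ g m = n))) as [Hn | Hn].
    + exists n. split; [lia | exact Hn].
    + apply not_all_ex_not in Hn. destruct Hn as [N0 HN0].
      destruct (IH (fun m => P m /\ g m <> n)) as [i [Hi Hinf]].
      * intro N. destruct (HP (max N N0)) as [m [Hm [Hfm HPm]]]. exists m.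
        repeat split; [lia | exact Hfm | exact HPm|].
        intro Hgm. apply HN0. exists m. repeat split; auto; lia.
      * intros m [HPm Hgm]. specialize (Hbound m HPm). lia.
      * exists i. split; [lia|]. revert Hinf. apply inf_many_mono. tauto.
Qed.

Lemma leftmost_branch_exists (B : nat -> nat) (f : nat -> bool) :
  (forall k n, a k n < B k) -> infinite_set f ->
  forall k, exists tau, leftmost_branch f k tau /\ inf_many f (prefix_agrees tau k).
Proof.
  intros Ha Hf. induction k as [|k [tau [HB Hinf]]].
  - exists (fun _ => 0). split; [exact I|]. intro N. destruct (Hf N) as [m [HNm Hfm]].
    exists m. repeat split; auto. intros j Hj. lia.
  - set (Q := fun i => inf_many f (prefix_agrees (set_at tau k i) (S k))).
    destruct (inf_many_pigeonhole f (a k) (B k) _ Hinf (fun m _ => Ha k m)) as [i0 [_ Hi0]].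
    assert (HQ0 : Q i0).
    { revert Hi0. apply inf_many_mono. intro m. apply prefix_agrees_set_at. }
    destruct (dec_inh_nat_subset_has_unique_least_element Q (fun i => classic (Q i))
                (ex_intro _ i0 HQ0)) as [i [[HQi Hmin] _]].
    exists (set_at tau k i). split; [split; [|split] | exact HQi].
    + apply (leftmost_branch_ext f k tau); [|exact HB].
      intros j Hj. unfold set_at. destruct (Nat.eqb_spec j k); [lia | reflexivity].
    + exact HQi.
    + intros i' Hi' HQ'. unfold set_at in Hi'. rewrite Nat.eqb_refl in Hi'.
      enough (i <= i') by lia. apply Hmin. revert HQ'. apply inf_many_mono. intro m.
      apply prefix_agrees_ext. intros j Hj. unfold set_at. destruct (j =? k); reflexivity.
Qed.


Lemma borel_inf_many (P : nat -> Prop) : borel (fun f => inf_many f P).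
Proof.
  apply (borel_forall (fun N f => exists m, N <= m /\ f m = true /\ P m)). intro N.
  apply (borel_union (fun m f => N <= m /\ f m = true /\ P m)). intro m.
  apply borel_ext with (fun f => f m = true /\ (N <= m /\ P m)).
  - apply borel_and; [apply borel_cyl | apply borel_const].
  - intro f. tauto.
Qed.

Lemma borel_leftmost_branch (k : nat) (tau : nat -> nat) :
  borel (fun f => leftmost_branch f k tau).
Proof.
  induction k as [|k IH]; cbn [leftmost_branch]; [apply borel_const|].
  apply borel_and; [exact IH|]. apply borel_and; [apply borel_inf_many|].
  apply (borel_forall (fun i f => i < tau k ->
           ~ inf_many f (prefix_agrees (set_at tau k i) (S k)))). intro i.
  destruct (classic (i < tau k)) as [Hi | Hi].
  - apply borel_ext with (fun f => ~ inf_many f (prefix_agrees (set_at tau k i) (S k))).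
    + apply borel_compl, borel_inf_many.
    + intro f. tauto.
  - apply borel_ext with (fun _ => True); [apply borel_const|]. intro f. tauto.
Qed.

(* [n] is kept when it lies in [f] and its address follows the leftmost branch
   for one more coordinate than the number [s] of elements kept before it. *)
Definition select_at (f : nat -> bool) (n s : nat) : bool :=
  f n && asbool (leftmost_branch f (S s) (fun j => a j n)).

Fixpoint selected_count (f : nat -> bool) (n : nat) : nat :=
  match n with
  | 0 => 0
  | S n' => selected_count f n' + (if select_at f n' (selected_count f n') then 1 else 0)
  end.

Definition select (f : nat -> bool) (n : nat) : bool := select_at f n (selected_count f n).

Lemma borel_select_at (n s : nat) : borel (fun f => select_at f n s = true).
Proof.
  apply borel_ext with (fun f => f n = true /\ leftmost_branch f (S s) (fun j => a j n)).
  - apply borel_and; [apply borel_cyl | apply borel_leftmost_branch].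
  - intro f. unfold select_at. rewrite Bool.andb_true_iff, asbool_true. reflexivity.
Qed.

Lemma borel_selected_count (n : nat) : forall s, borel (fun f => selected_count f n = s).
Proof.
  induction n as [|n IH]; intro s; cbn [selected_count]; [apply borel_const|].
  apply borel_ext with (fun f => (selected_count f n = s /\ ~ select_at f n s = true) \/
      (exists s', s = S s' /\ selected_count f n = s' /\ select_at f n s' = true)).
  - apply borel_or.
    + apply borel_and; [apply IH | apply borel_compl, borel_select_at].
    + apply (borel_union (fun s' f =>
               s = S s' /\ selected_count f n = s' /\ select_at f n s' = true)). intro s'.
      apply borel_and; [apply borel_const | apply borel_and; [apply IH | apply borel_select_at]].
  - intro f. destruct (select_at f n (selected_count f n)) eqn:Hsel; split.
    + intros [[<- Hnot] | [s' [-> [<- _]]]]; [contradiction | lia].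
    + intros <-. right. exists (selected_count f n). repeat split; [lia | exact Hsel].
    + intros [[<- _] | [s' [-> [<- Hs']]]]; [lia | congruence].
    + intros <-. left. rewrite Nat.add_0_r, Hsel. split; [reflexivity | discriminate].
Qed.

Lemma borel_select (n : nat) : borel (fun f => select f n = true).
Proof.
  apply borel_ext with (fun f => exists s, selected_count f n = s /\ select_at f n s = true).
  - apply (borel_union (fun s f => selected_count f n = s /\ select_at f n s = true)).
    intro s. apply borel_and; [apply borel_selected_count | apply borel_select_at].
  - intro f. unfold select. split; [intros [s [<- Hs]]; exact Hs | intro Hs; eauto].
Qed.

Lemma select_borel_map : borel_map select.
Proof.
  intros C HC. induction HC as [n b | A _ IH | A _ IH | A C _ IH HAC].
  - destruct b; [exact (borel_select n)|].
    apply borel_ext with (fun f => ~ select f n = true).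
    + apply borel_compl, borel_select.
    + intro f. rewrite Bool.not_true_iff_false. reflexivity.
  - apply borel_compl, IH.
  - exact (borel_union _ IH).
  - apply borel_ext with (fun f => A (select f)); [exact IH|]. intro f. apply HAC.
Qed.

Lemma select_subset (f : nat -> bool) : subset_of (select f) f.
Proof.
  intros n Hn. unfold select, select_at in Hn. now apply Bool.andb_true_iff in Hn.
Qed.

Lemma select_leftmost_branch (f : nat -> bool) (n : nat) :
  select f n = true -> leftmost_branch f (S (selected_count f n)) (fun j => a j n).
Proof.
  unfold select, select_at. rewrite Bool.andb_true_iff, asbool_true. tauto.
Qed.

Lemma selected_count_mono (f : nat -> bool) (n n' : nat) :
  n <= n' -> selected_count f n <= selected_count f n'.
Proof. induction 1 as [|n' _ IH]; cbn [selected_count]; lia. Qed.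

Lemma selected_count_select (f : nat -> bool) (n : nat) :
  select f n = true -> selected_count f (S n) = S (selected_count f n).
Proof. unfold select. intro Hsel. cbn [selected_count]. rewrite Hsel. lia. Qed.

Lemma selected_count_const (f : nat -> bool) (N n : nat) :
  N <= n -> (forall m, N <= m -> m < n -> select f m = false) ->
  selected_count f n = selected_count f N.
Proof.
  induction 1 as [|n Hle IH]; intro Hnone; [reflexivity|]. cbn [selected_count].
  assert (Hn : select f n = false) by (apply Hnone; lia).
  unfold select in Hn. rewrite Hn, IH; [lia|]. intros m Hm1 Hm2. apply Hnone; lia.
Qed.

Lemma select_infinite (B : nat -> nat) (f : nat -> bool) :
  (forall k n, a k n < B k) -> infinite_set f -> infinite_set (select f).
Proof.
  intros Ha Hf N.
  destruct (leftmost_branch_exists B f Ha Hf (S (selected_count f N))) as [tau [HB Hinf]].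
  destruct (Hinf N) as [n [Hn [Hfn Hagree]]].
  destruct (classic (exists m, N <= m /\ m < n /\ select f m = true))
    as [[m [HNm [Hmn Hsel]]] | Hnone].
  - exists m. split; [exact HNm | exact Hsel].
  - exists n. split; [exact Hn|].
    assert (Hcount : selected_count f n = selected_count f N).
    { apply selected_count_const; [exact Hn|]. intros m HNm Hmn.
      apply Bool.not_true_iff_false. intro Hsel. apply Hnone. eauto. }
    unfold select, select_at. rewrite Hcount, Hfn. apply asbool_true.
    apply (leftmost_branch_ext f _ tau); [|exact HB]. intros j Hj. symmetry. now apply Hagree.
Qed.

Lemma selected_count_unbounded (f : nat -> bool) :
  infinite_set (select f) -> forall K, exists N, K <= selected_count f N.
Proof.
  intros Hinf K. induction K as [|K [N HN]]; [exists 0; lia|].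
  destruct (Hinf N) as [m [Hm Hsel]]. exists (S m).
  rewrite (selected_count_select f m Hsel). pose proof (selected_count_mono f N m Hm). lia.
Qed.

Lemma select_addresses_stabilize (f : nat -> bool) (k : nat) :
  exists N, forall n m, N <= n -> N <= m -> select f n = true -> select f m = true ->
    a k n = a k m.
Proof.
  destruct (classic (infinite_set (select f))) as [Hinf | Hfin].
  - destruct (selected_count_unbounded f Hinf (S k)) as [N HN].
    exists N. intros n m Hn Hm Hsn Hsm.
    assert (Hdeep : forall p, N <= p -> select f p = true ->
               leftmost_branch f (S k) (fun j => a j p)).
    { intros p Hp Hsp. apply (leftmost_branch_le f (S (selected_count f p))).
      - pose proof (selected_count_mono f N p Hp). lia.
      - now apply select_leftmost_branch. }
    exact (leftmost_branch_unique f (S k) _ _ (Hdeep n Hn Hsn) (Hdeep m Hm Hsm) k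
             (Nat.lt_succ_diag_r k)).
  - apply not_all_ex_not in Hfin. destruct Hfin as [N HN].
    exists N. intros n m Hn _ Hsn _. exfalso. apply HN. eauto.
Qed.

End AddressTree.

Open Scope R_scope.

Theorem mainTheorem17 (X : Type) (d : X -> X -> R) (x : nat -> X)
    (Hmet : is_metric d) (Hcpt : metric_compact d) (Hdense : dense_seq d x) :
  (exists c : nat -> nat -> bool,
     forall h : nat -> bool, infinite_set h -> homogeneous c h ->
       converges_along d x h) /\
  (exists S : (nat -> bool) -> (nat -> bool), borel_selector (conv_family d x) S).
Proof.
  destruct (addresses_exist X d Hmet Hcpt x) as [a [B [cen [Ha Hcen]]]].
  split.
  - exists (lex_coloring a). intros h Hinf Hhom.
    apply (converges_of_stable_addresses X d Hmet Hcpt x a cen h Hcen).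
    exact (lex_homogeneous_addresses_stabilize a B h Ha Hinf Hhom).
  - exists (select a). split; [|split; [|split]].
    + apply select_borel_map.
    + apply select_subset.
    + intro f. apply (converges_of_stable_addresses X d Hmet Hcpt x a cen _ Hcen).
      apply select_addresses_stabilize.
    + intro f. exact (select_infinite a B f Ha).
Qed.
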